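(* As $N\to\infty$, $$\sum_{k=1}^{N}\varphi(k)\,I_N\!\left(\frac{1}{k}\right)=\frac{N^3}{6\zeta(3)}+O\!\left(\frac{N^3}{\log N}\right),$$ i.e. there is a constant $C$ such that for all integers $N\ge 2$, $\left|\sum_{k=1}^{N}\varphi(k)I_N(1/k)-\frac{N^3}{6\zeta(3)}\right|\le C\,\frac{N^3}{\log N}$.
   Context: $\varphi$ is Euler's totient function and $\zeta$ is the Riemann zeta function. For a positive integer $N$, the Farey sequence of order $N$, $F_N$, is the increasing list of all reduced fractions $h/k$ with $0\le h\le k\le N$ and $\gcd(h,k)=1$; it begins with $0/1$ and ends with $1/1$. For $x\in F_N$, $I_N(x)$ denotes the position of $x$ in $F_N$, indexed starting from $1$ (so $I_N(0/1)=1$ and $I_N(1/1)=|F_N|$). *)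

From mathcomp Require Import all_boot.
From Stdlib Require Import Reals.

(* I_N(h/k): the 1-based position of h/k in the Farey sequence F_N, i.e. the number
   of reduced fractions a/b with 0 <= a <= b <= N, gcd(a,b) = 1 and a/b <= h/k
   (comparison a/b <= h/k written as a*k <= h*b, valid for b,k > 0). *)
Definition farey_index (N h k : nat) : nat :=
  \sum_(1 <= b < N.+1) \sum_(0 <= a < b.+1) nat_of_bool (coprime a b && (a * k <= h * b)).

Definition zeta3_term (n : nat) : R := Rinv (pow (INR n.+1) 3).

(* Counting the reduced fractions a/b <= 1/k, the sum of phi(k) I_N(1/k) equals Phi(N) + P(N),
   where Phi(n) = sum_{k<=n} phi(k) and P(N) = sum_{b<=N} p(b) with
   p(b) = sum_{a<=b, (a,b)=1} Phi(floor(b/a))  ([totient_sum], [coprime_floor_total],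
   [coprime_floor_sum]).  Since sum_{a<=n} Phi(floor(n/a)) = sum_{k<=n} phi(k) floor(n/k)
   = n(n+1)/2, grouping the a <= n by gcd(a,n) gives sum_{g|n} p(n/g) = n(n+1)/2, hence the
   Moebius-type identity sum_{g<=N} P(floor(N/g)) = N(N+1)(N+2)/6.  It also holds, up to
   O(N^2), with N^3/(6 zeta(3)) in place of P(N), because
   sum_{g<=N} floor(N/g)^3 = zeta(3) N^3 + O(N^2).  So E(N) = P(N) - N^3/(6 zeta(3)) satisfies
   |sum_{g<=N} E(floor(N/g))| <= 2N^2, and strong induction with sum_{g>=2} 1/g^2 <= 3/4
   gives |E(N)| <= 8N^2.  With Phi(N) <= N^2 the error is O(N^2), stronger than
   O(N^3/log N). *)

From HB Require Import structures.
From mathcomp Require Import all_boot cyclic zify.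
From Stdlib Require Import Reals Lra.

Set Implicit Arguments.
Unset Strict Implicit.
Unset Printing Implicit Defensive.

Definition totient_sum (n : nat) : nat := \sum_(1 <= k < n.+1) totient k.

Lemma sum_nat_le_cond (F : nat -> nat) m n : m <= n ->
  \sum_(1 <= i < n.+1 | i <= m) F i = \sum_(1 <= i < m.+1) F i.
Proof. by move=> le_mn; rewrite [RHS](big_nat_widen _ _ _ _ _ (_ : m.+1 <= n.+1)). Qed.

Lemma count_mul_le k n : 0 < k -> \sum_(1 <= a < n.+1 | a * k <= n) 1 = n %/ k.
Proof.
move=> k_gt0; rewrite (eq_bigl (fun a => a <= n %/ k)) => [|a]; last by rewrite leq_divRL.
by rewrite sum_nat_le_cond ?leq_div // sum_nat_const_nat subn1 muln1.
Qed.

Lemma sum_totient_sum_div n :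
  \sum_(1 <= a < n.+1) totient_sum (n %/ a) = \sum_(1 <= k < n.+1) totient k * (n %/ k).
Proof.
transitivity (\sum_(1 <= a < n.+1) \sum_(1 <= k < n.+1 | k * a <= n) totient k).
  apply: eq_big_nat => a /andP[a_gt0 _].
  rewrite /totient_sum -(sum_nat_le_cond _ (leq_div n a)).
  by apply: eq_bigl => k; rewrite leq_divRL.
under eq_bigr do rewrite big_mkcond.
rewrite exchange_big; apply: eq_big_nat => k /andP[k_gt0 _].
rewrite -count_mul_le // big_distrr /= muln1 [RHS]big_mkcond.
by apply: eq_bigr => a _; rewrite mulnC.
Qed.

Lemma sum_totient_dvd_nat n : 0 < n -> \sum_(1 <= d < n.+1 | d %| n) totient d = n.
Proof.
move=> n_gt0; rewrite -[RHS](sum_totient_dvd n) -(big_mkord (dvdn^~ n)).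
by rewrite [RHS]big_ltn_cond // dvd0n gtn_eqF.
Qed.

Lemma sum_totient_mul_div n :
  \sum_(1 <= k < n.+1) totient k * (n %/ k) = 'C(n.+1, 2).
Proof.
elim: n => [|n IHn]; first by rewrite big_geq.
under eq_big_nat => k /andP[k_gt0 _] do rewrite divnS // mulnDr.
rewrite big_split /= big_mkcond /=.
rewrite (eq_bigr (fun k => if k %| n.+1 then totient k else 0)) => [|k _]; last first.
  by case: (k %| n.+1); rewrite ?muln1 ?muln0.
rewrite -big_mkcond sum_totient_dvd_nat // big_nat_recr //= divn_small // muln0 addn0.
by rewrite IHn [RHS]binS bin1 addnC.
Qed.

Lemma sum_dvd_reindex (F : nat -> nat) (Q : pred nat) g m : 0 < g ->
  \sum_(1 <= a < (g * m).+1 | (g %| a) && Q (a %/ g)) F a =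
  \sum_(1 <= a < m.+1 | Q a) F (g * a).
Proof.
move=> g_gt0; elim: m => [|m IHm]; first by rewrite muln0 !big_geq.
rewrite (big_cat_nat _ (n := (g * m).+1)) //=; last by rewrite ltnS leq_mul2l leqnSn orbT.
rewrite IHm [RHS]big_mkcond big_nat_recr //= -big_mkcond /=; congr (_ + _).
rewrite big_mkcond big_nat_recr /=; last by rewrite mulnS; lia.
rewrite [X in X + _]big_nat_cond big1 ?add0n; last first.
  move=> a /andP[/andP[lo hi] _]; case: ifP => // /andP[/dvdnP[k def_a] _].
  move: lo hi; rewrite def_a mulnC ltn_pmul2r // [k * g]mulnC ltn_pmul2l //; lia.
by rewrite dvdn_mulr // mulKn.
Qed.

Lemma sum_gcd_partition (F : nat -> nat) n : 0 < n ->
  \sum_(1 <= a < n.+1) F a =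
  \sum_(1 <= g < n.+1 | g %| n) \sum_(1 <= a < (n %/ g).+1 | coprime a (n %/ g)) F (g * a).
Proof.
move=> n_gt0.
transitivity (\sum_(0 <= g < n.+1 | g %| n)
                \sum_(1 <= a < (n %/ g).+1 | coprime a (n %/ g)) F (g * a)); last first.
  by rewrite big_ltn_cond // dvd0n gtn_eqF.
have gcd_lt a : gcdn a n < n.+1 by rewrite ltnS dvdn_leq // dvdn_gcdr.
rewrite (partition_big (fun a => inord (gcdn a n) : 'I_n.+1) (fun g : 'I_n.+1 => g %| n));
  last by move=> a _; rewrite inordK // dvdn_gcdr.
rewrite [RHS]big_mkord; apply: eq_bigr => -[g g_lt] /= g_dvd.
have g_gt0 : 0 < g by apply: dvdn_gt0 g_dvd.
have def_n : n = g * (n %/ g) by rewrite mulnC divnK.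
rewrite -(sum_dvd_reindex F (fun a => coprime a (n %/ g)) _ g_gt0) -def_n.
apply: eq_bigl => a; rewrite -val_eqE /= inordK //.
apply/eqP/andP => [gcd_a | [/dvdnP[b ->]]]; last first.
  by rewrite mulnK // mulnC {2}def_n -muln_gcdr => /eqP ->; rewrite muln1.
have g_dvd_a : g %| a by rewrite -gcd_a dvdn_gcdl.
split=> //; move: gcd_a; rewrite {1}def_n -(divnK g_dvd_a) [_ %/ g * g]mulnC -muln_gcdr.
by rewrite /coprime mulKn // => /(congr1 (divn^~ g)); rewrite mulKn // divnn g_gt0 => ->.
Qed.

Definition coprime_floor_sum (b : nat) : nat :=
  \sum_(1 <= a < b.+1 | coprime a b) totient_sum (b %/ a).

Definition coprime_floor_total (N : nat) : nat := \sum_(1 <= b < N.+1) coprime_floor_sum b.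

Lemma sum_dvd_coprime_floor_sum n : 0 < n ->
  \sum_(1 <= g < n.+1 | g %| n) coprime_floor_sum (n %/ g) = 'C(n.+1, 2).
Proof.
move=> n_gt0; rewrite -sum_totient_mul_div -sum_totient_sum_div.
rewrite (sum_gcd_partition (fun a => totient_sum (n %/ a)) n_gt0).
by apply: eq_bigr => g _; apply: eq_bigr => a _; rewrite divnMA.
Qed.

Lemma coprime_floor_total_divS N g : 0 < g ->
  coprime_floor_total (N.+1 %/ g) =
  coprime_floor_total (N %/ g) + (if g %| N.+1 then coprime_floor_sum (N.+1 %/ g) else 0).
Proof.
move=> g_gt0; rewrite divnS //; case: (g %| N.+1); last by rewrite addn0.
by rewrite add1n /coprime_floor_total big_nat_recr.
Qed.

Lemma sum_coprime_floor_total_div N :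
  \sum_(1 <= g < N.+1) coprime_floor_total (N %/ g) = \sum_(1 <= n < N.+1) 'C(n.+1, 2).
Proof.
elim: N => [|N IHN]; first by rewrite !big_geq.
rewrite [RHS]big_nat_recr //= -IHN -(sum_dvd_coprime_floor_sum (ltn0Sn N)).
under eq_big_nat => g /andP[g_gt0 _] do rewrite coprime_floor_total_divS //.
rewrite big_split /= -big_mkcond big_nat_recr //= divn_small //.
by rewrite [coprime_floor_total 0]big_geq ?addn0.
Qed.

Lemma sum_totient_mul_le a b N : 0 < a -> b <= N ->
  \sum_(1 <= k < N.+1) totient k * (a * k <= b) = totient_sum (b %/ a).
Proof.
move=> a_gt0 le_bN.
rewrite /totient_sum -(sum_nat_le_cond _ (leq_trans (leq_div b a) le_bN)) [RHS]big_mkcond /=.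
apply: eq_bigr => k _; rewrite leq_divRL // [k * a]mulnC.
by case: (a * k <= b); rewrite ?muln1 ?muln0.
Qed.

Lemma sum_totient_farey_index N : 0 < N ->
  \sum_(1 <= k < N.+1) totient k * farey_index N 1 k = coprime_floor_total N + totient_sum N.
Proof.
move=> N_gt0; rewrite /farey_index.
under eq_bigr => k _ do rewrite big_distrr /=.
rewrite exchange_big /=.
under eq_bigr => b _ do (under eq_bigr => k _ do rewrite big_distrr /=; rewrite exchange_big /=).
transitivity (\sum_(1 <= b < N.+1) (coprime_floor_sum b + (b == 1) * totient_sum N)).
  apply: eq_big_nat => b /andP[b_gt0]; rewrite ltnS => le_bN.
  rewrite big_ltn // addnC /coprime_floor_sum [in RHS]big_mkcond; congr (_ + _).
    apply: eq_big_nat => a /andP[a_gt0 _]; case: ifP => [cop_ab | ncop_ab].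
      by rewrite -(sum_totient_mul_le a_gt0 le_bN) mul1n.
    by rewrite big1 // => k _; rewrite muln0.
  rewrite /coprime gcd0n; case: (b == 1) => /=; last by rewrite big1 // => k _; rewrite muln0.
  by rewrite mul1n; apply: eq_bigr => k _; rewrite muln1.
rewrite big_split /=; congr (_ + _).
by rewrite big_ltn // eqxx mul1n big_nat_cond big1 ?addn0 // => -[|[|b]] /andP[/andP[]].
Qed.

Lemma mul2_bin2 n : 2 * 'C(n.+1, 2) = n.+1 * n.
Proof. by rewrite -mul_bin_diag bin1. Qed.

Lemma totient_sum_le_sq n : totient_sum n <= n * n.
Proof.
suff : totient_sum n <= 'C(n.+1, 2) by have := mul2_bin2 n; nia.
rewrite -sum_totient_mul_div /totient_sum big_nat_cond [X in _ <= X]big_nat_cond.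
apply: leq_sum => k /andP[/andP[k_gt0 le_kn] _].
by rewrite -[X in X <= _]muln1 leq_mul2l divn_gt0 // -ltnS le_kn orbT.
Qed.

Lemma mul6_sum_bin2 N : 6 * \sum_(1 <= n < N.+1) 'C(n.+1, 2) = N * N.+1 * N.+2.
Proof.
elim: N => [|N IHN]; first by rewrite big_geq.
rewrite big_nat_recr //= mulnDr IHN; have := mul2_bin2 N.+1; lia.
Qed.

HB.instance Definition _ := Monoid.isComLaw.Build R 0%R Rplus
  (fun x y z => esym (Rplus_assoc x y z)) Rplus_comm Rplus_0_l.
HB.instance Definition _ := Monoid.isMulLaw.Build R 0%R Rmult Rmult_0_l Rmult_0_r.
HB.instance Definition _ := Monoid.isAddLaw.Build R Rmult Rplus
  Rmult_plus_distr_r Rmult_plus_distr_l.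

Section RealEstimates.

Local Open Scope R_scope.

Lemma INR_sum I r (P : pred I) (F : I -> nat) :
  INR (\sum_(i <- r | P i) F i) = \big[Rplus/0]_(i <- r | P i) INR (F i).
Proof. exact: (big_morph INR plus_INR (erefl _)). Qed.

Lemma sumR_le I r (P : pred I) (F G : I -> R) : (forall i, P i -> F i <= G i) ->
  \big[Rplus/0]_(i <- r | P i) F i <= \big[Rplus/0]_(i <- r | P i) G i.
Proof. by move=> le_FG; apply: (big_ind2 Rle) => [|x1 x2 y1 y2|]; [lra | lra | ]. Qed.

Lemma sumR_ge0 I r (P : pred I) (F : I -> R) : (forall i, P i -> 0 <= F i) ->
  0 <= \big[Rplus/0]_(i <- r | P i) F i.
Proof. by move=> F_ge0; apply: (big_ind (Rle 0)) => [|x y|]; [lra | lra | ]. Qed.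

Lemma Rabs_sumR_le I r (P : pred I) (F : I -> R) :
  Rabs (\big[Rplus/0]_(i <- r | P i) F i) <= \big[Rplus/0]_(i <- r | P i) Rabs (F i).
Proof.
apply: (big_ind2 (fun x y => Rabs x <= y)) => [|x1 x2 y1 y2 le_x le_y|i _].
- by rewrite Rabs_R0; lra.
- by have := Rabs_triang x1 y1; lra.
- exact: Rle_refl.
Qed.

Lemma sumR_sub I r (P : pred I) (F G : I -> R) :
  \big[Rplus/0]_(i <- r | P i) (F i - G i) =
  \big[Rplus/0]_(i <- r | P i) F i - \big[Rplus/0]_(i <- r | P i) G i.
Proof.
rewrite /Rminus big_split /=; congr (_ + _).
by rewrite (big_morph Ropp Ropp_plus_distr Ropp_0).
Qed.

Lemma sumR_nat_widen (F : nat -> R) (m n1 n2 : nat) :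
  (forall i, 0 <= F i) -> (m <= n1)%nat -> (n1 <= n2)%nat ->
  \big[Rplus/0]_(m <= i < n1) F i <= \big[Rplus/0]_(m <= i < n2) F i.
Proof.
move=> F_ge0 le_m_n1 le_n12; rewrite [X in _ <= X](@big_cat_nat _ _ _ n1) //=.
by have := @sumR_ge0 _ (index_iota n1 n2) xpredT F (fun i _ => F_ge0 i); lra.
Qed.

(* The generic bigop lemmas present [Rplus] and [Rmult] through monoid-structure projections,
   which [lra] treats as opaque atoms; these restatements expose the operators. *)
Lemma sumR_nat_recr (F : nat -> R) (m n : nat) : (m <= n)%nat ->
  \big[Rplus/0]_(m <= i < n.+1) F i = \big[Rplus/0]_(m <= i < n) F i + F n.
Proof. exact: big_nat_recr. Qed.

Lemma sumR_ltn (F : nat -> R) (m n : nat) : (m < n)%nat ->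
  \big[Rplus/0]_(m <= i < n) F i = F m + \big[Rplus/0]_(m.+1 <= i < n) F i.
Proof. exact: big_ltn. Qed.

Lemma sumR_cat_nat (F : nat -> R) (m n p : nat) : (m <= n)%nat -> (n <= p)%nat ->
  \big[Rplus/0]_(m <= i < p) F i =
  \big[Rplus/0]_(m <= i < n) F i + \big[Rplus/0]_(n <= i < p) F i.
Proof. exact: big_cat_nat. Qed.

Lemma sumR_mull I r (P : pred I) (c : R) (F : I -> R) :
  \big[Rplus/0]_(i <- r | P i) (c * F i) = c * \big[Rplus/0]_(i <- r | P i) F i.
Proof. by rewrite big_distrr. Qed.

Lemma sumR_mulr I r (P : pred I) (c : R) (F : I -> R) :
  \big[Rplus/0]_(i <- r | P i) (F i * c) = \big[Rplus/0]_(i <- r | P i) F i * c.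
Proof. by rewrite big_distrl. Qed.

Lemma sumR_le_nat (F G : nat -> R) (m n : nat) :
  (forall i, (m <= i)%nat -> (i < n)%nat -> F i <= G i) ->
  \big[Rplus/0]_(m <= i < n) F i <= \big[Rplus/0]_(m <= i < n) G i.
Proof.
move=> le_FG; rewrite big_nat_cond [X in _ <= X]big_nat_cond.
by apply: sumR_le => i /andP[/andP[le_mi lt_in] _]; apply: le_FG.
Qed.

Lemma sum_f_R0_big (f : nat -> R) n : sum_f_R0 f n = \big[Rplus/0]_(0 <= i < n.+1) f i.
Proof. by elim: n => [|n IHn]; [rewrite big_nat1 | rewrite big_nat_recr //= IHn]. Qed.

Lemma INR_pos n : (0 < n)%nat -> 0 < INR n.
Proof. by move=> /ltP; apply: lt_0_INR. Qed.

Lemma inv_sq_le_telescope n : (0 < n)%nat -> / INR n.+1 ^ 2 <= / INR n - / INR n.+1.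
Proof.
move=> /INR_pos n_gt0; rewrite S_INR.
have -> : / INR n - / (INR n + 1) = / (INR n * (INR n + 1)) by field; lra.
apply: Rinv_le_contravar; nra.
Qed.

Lemma sum_inv_sq_tail m n : (0 < m)%nat ->
  \big[Rplus/0]_(m.+1 <= g < n) / INR g ^ 2 <= / INR m.
Proof.
move=> m_gt0; have inv_m_gt0 := Rinv_0_lt_compat _ (INR_pos m_gt0).
suff telescope k : \big[Rplus/0]_(m.+1 <= g < (m + k).+1) / INR g ^ 2 <= / INR m - / INR (m + k).
  case: (leqP n m.+1) => [le_nm | lt_mn]; first by rewrite big_geq //; lra.
  have [k ->] : exists k, n = (m + k).+1 by exists (n - m.+1)%nat; lia.
  have mk_gt0 : (0 < m + k)%nat by rewrite addn_gt0 m_gt0.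
  by have := Rinv_0_lt_compat _ (INR_pos mk_gt0); have := telescope k; lra.
elim: k => [|k IHk]; first by rewrite addn0 big_geq //; lra.
rewrite addnS sumR_nat_recr; last by rewrite ltnS leq_addr.
by have := inv_sq_le_telescope (leq_trans m_gt0 (leq_addr k m)); lra.
Qed.

Lemma sum_inv_sq_from2 n : \big[Rplus/0]_(2 <= g < n.+1) / INR g ^ 2 <= 3 / 4.
Proof.
case: (leqP n 1) => [le_n1 | lt1n]; first by rewrite big_geq //; lra.
rewrite sumR_ltn //; have := sum_inv_sq_tail n.+1 (isT : (0 < 2)%nat).
have -> : / INR 2 = 1 / 2 by rewrite /=; field.
have -> : / INR 2 ^ 2 = 1 / 4 by rewrite /=; field.
lra.
Qed.

Lemma sum_inv_sq_le n : \big[Rplus/0]_(1 <= g < n.+1) / INR g ^ 2 <= 7 / 4.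
Proof.
case: n => [|n]; first by rewrite big_geq //; lra.
rewrite sumR_ltn //; have := sum_inv_sq_from2 n.+1.
have -> : / INR 1 ^ 2 = 1 by rewrite /=; field.
lra.
Qed.

Lemma floor_div_bounds N g : (0 < g)%nat ->
  INR (N %/ g) <= INR N / INR g /\ INR N / INR g - 1 <= INR (N %/ g).
Proof.
move=> /[dup] g_gt0 /INR_pos g_pos.
have N_eq : INR N = INR (N %/ g) * INR g + INR (N %% g).
  by rewrite {1}(divn_eq N g) plus_INR mult_INR.
have mod_lt : INR (N %% g) < INR g by apply/lt_INR/ltP; rewrite ltn_mod.
have mod_ge0 := pos_INR (N %% g).
have -> : INR N / INR g = INR (N %/ g) + INR (N %% g) / INR g by rewrite N_eq; field; lra.
have : INR (N %% g) / INR g < 1.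
  apply: (Rmult_lt_reg_r (INR g)) => //.
  by rewrite /Rdiv Rmult_assoc Rinv_l; [lra | exact: Rgt_not_eq].
have : 0 <= INR (N %% g) / INR g by apply: Rmult_le_pos => //; apply/Rlt_le/Rinv_0_lt_compat.
lra.
Qed.

Lemma cube_sub_le x y : 1 <= x -> x - 1 <= y -> x ^ 3 - 3 * x ^ 2 <= y ^ 3.
Proof.
move=> x_ge1 le_y; apply: (Rle_trans _ ((x - 1) ^ 3)); first nra.
by apply: pow_incr; lra.
Qed.

Lemma sq_le_cube_div_ln x : 1 < x -> x ^ 2 <= x ^ 3 / ln x.
Proof.
move=> x_gt1.
have ln_pos : 0 < ln x by rewrite -ln_1; apply: ln_increasing; lra.
have ln_lt : ln x < x by have := exp_ineq1 (ln x) (Rgt_not_eq _ _ ln_pos); rewrite exp_ln; lra.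
apply: (Rmult_le_reg_r (ln x)) => //.
by rewrite /Rdiv Rmult_assoc Rinv_l; [nra | exact: Rgt_not_eq].
Qed.

Lemma inv_cube_ge0 g : 0 <= / INR g ^ 3.
Proof.
case: g => [|g]; first by rewrite /= !Rmult_0_l Rinv_0; lra.
by apply/Rlt_le/Rinv_0_lt_compat/pow_lt/INR_pos.
Qed.

Lemma inv_cube_le_inv_sq g : (0 < g)%nat -> / INR g ^ 3 <= / INR g ^ 2.
Proof.
move=> g_gt0; have g_ge1 : 1 <= INR g by apply: (le_INR 1); apply/leP.
by apply: Rinv_le_contravar; [apply: pow_lt | simpl]; nra.
Qed.

Section Zeta3.

Variable z3 : R.
Hypothesis z3_sum : infinite_sum zeta3_term z3.

Lemma zeta3_partial_sum n :
  sum_f_R0 zeta3_term n = \big[Rplus/0]_(1 <= g < n.+2) / INR g ^ 3.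
Proof. by rewrite sum_f_R0_big big_add1. Qed.

Lemma zeta3_partial_le n : \big[Rplus/0]_(1 <= g < n.+1) / INR g ^ 3 <= z3.
Proof.
apply: (Rle_trans _ _ _ (sumR_nat_widen inv_cube_ge0 (ltn0Sn n) (leqnSn n.+1))).
rewrite -zeta3_partial_sum; apply: (growing_ineq _ _ _ z3_sum) => k /=.
by have := inv_cube_ge0 k.+2; rewrite /zeta3_term; lra.
Qed.

Lemma zeta3_le_partial n : (0 < n)%nat ->
  z3 <= \big[Rplus/0]_(1 <= g < n.+1) / INR g ^ 3 + / INR n.
Proof.
move=> n_gt0; set c := _ + _.
apply: (@Rle_cv_lim (sum_f_R0 zeta3_term) (fun=> c)) => [M | // | eps eps_gt0]; last first.
  by exists 0%nat => k _; rewrite R_dist_eq.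
rewrite zeta3_partial_sum.
apply: (Rle_trans _ _ _ (sumR_nat_widen inv_cube_ge0 (ltn0Sn M.+1) (leq_maxl M.+2 n.+1))).
rewrite (@sumR_cat_nat _ 1 n.+1) ?leq_maxr //; apply: Rplus_le_compat_l.
apply: Rle_trans (sum_inv_sq_tail _ n_gt0).
by apply: sumR_le_nat => g lt_ng _; apply: inv_cube_le_inv_sq; apply: leq_ltn_trans lt_ng.
Qed.

Lemma one_le_zeta3 : 1 <= z3.
Proof.
have := zeta3_partial_le 1; rewrite big_nat1.
by have -> : / INR 1 ^ 3 = 1 by rewrite /=; field.
Qed.

Definition coprime_floor_error (n : nat) : R := INR (coprime_floor_total n) - INR n ^ 3 / (6 * z3).

Lemma sum_cube_floor_div_le N :
  \big[Rplus/0]_(1 <= g < N.+1) INR (N %/ g) ^ 3 <= INR N ^ 3 * z3.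
Proof.
apply: (Rle_trans _ (\big[Rplus/0]_(1 <= g < N.+1) (INR N ^ 3 * / INR g ^ 3))).
  apply: sumR_le_nat => g g_gt0 _.
  have [le_q _] := floor_div_bounds N g_gt0.
  have -> : INR N ^ 3 * / INR g ^ 3 = (INR N / INR g) ^ 3 by field; apply/Rgt_not_eq/INR_pos.
  by apply: pow_incr; split; [apply: pos_INR | ].
rewrite sumR_mull; apply: Rmult_le_compat_l (zeta3_partial_le N).
exact/pow_le/pos_INR.
Qed.

Lemma sum_cube_floor_div_ge N : (0 < N)%nat ->
  INR N ^ 3 * z3 - 7 * INR N ^ 2 <= \big[Rplus/0]_(1 <= g < N.+1) INR (N %/ g) ^ 3.
Proof.
move=> N_gt0; have N_pos := INR_pos N_gt0.
apply: (Rle_trans _ (\big[Rplus/0]_(1 <= g < N.+1)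
                       (INR N ^ 3 * / INR g ^ 3 - 3 * INR N ^ 2 * / INR g ^ 2))); last first.
  apply: sumR_le_nat => g g_gt0 g_le; have g_pos := INR_pos g_gt0.
  have [le_q ge_q] := floor_div_bounds N g_gt0.
  have q_ge1 : 1 <= INR (N %/ g) by apply: (le_INR 1); apply/leP; rewrite divn_gt0.
  have -> : INR N ^ 3 * / INR g ^ 3 - 3 * INR N ^ 2 * / INR g ^ 2 =
            (INR N / INR g) ^ 3 - 3 * (INR N / INR g) ^ 2 by field; lra.
  by apply: cube_sub_le; lra.
rewrite sumR_sub !sumR_mull.
have := sum_inv_sq_le N; have := zeta3_le_partial N_gt0.
set S3 := \big[Rplus/0]_(1 <= g < N.+1) / INR g ^ 3.
set S2 := \big[Rplus/0]_(1 <= g < N.+1) / INR g ^ 2 => zeta3_le S2_le.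
have : INR N ^ 3 * z3 <= INR N ^ 3 * S3 + INR N ^ 2.
  have -> : INR N ^ 2 = INR N ^ 3 * / INR N by field; lra.
  by rewrite -Rmult_plus_distr_l; apply: Rmult_le_compat_l => //; apply: pow_le; lra.
have : 3 * INR N ^ 2 * S2 <= 3 * INR N ^ 2 * (7 / 4) by apply: Rmult_le_compat_l => //; nra.
have : 0 <= INR N ^ 2 by apply: pow_le; lra.
lra.
Qed.

Lemma sum_coprime_floor_error_div N : (0 < N)%nat ->
  Rabs (\big[Rplus/0]_(1 <= g < N.+1) coprime_floor_error (N %/ g)) <= 2 * INR N ^ 2.
Proof.
move=> N_gt0; have N_ge1 : 1 <= INR N by apply: (le_INR 1); apply/leP.
have z3_ge1 := one_le_zeta3.
rewrite sumR_sub -INR_sum sum_coprime_floor_total_div /Rdiv sumR_mulr.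
have := sum_cube_floor_div_le N; have := sum_cube_floor_div_ge N_gt0.
set S := \big[Rplus/0]_(1 <= g < N.+1) INR (N %/ g) ^ 3 => S_ge S_le.
have T_eq : 6 * INR (\sum_(1 <= n < N.+1) 'C(n.+1, 2)) = INR N * (INR N + 1) * (INR N + 2).
  by have := f_equal INR (mul6_sum_bin2 N); rewrite !mult_INR !S_INR INR_0; lra.
set q := / (6 * z3).
have z3q : z3 * q = 1 / 6 by rewrite /q; field; lra.
have q_bounds : 0 < q <= / 6.
  by split; [apply: Rinv_0_lt_compat | apply: Rinv_le_contravar]; lra.
have Sq_le : S * q <= INR N ^ 3 / 6.
  apply: (Rle_trans _ (INR N ^ 3 * z3 * q)); first by apply: Rmult_le_compat_r; lra.
  by rewrite Rmult_assoc z3q; lra.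
have Sq_ge : INR N ^ 3 / 6 - 7 / 6 * INR N ^ 2 <= S * q.
  apply: (Rle_trans _ ((INR N ^ 3 * z3 - 7 * INR N ^ 2) * q)); last first.
    by apply: Rmult_le_compat_r; lra.
  rewrite Rmult_minus_distr_r Rmult_assoc z3q.
  have : INR N ^ 2 * q <= INR N ^ 2 * / 6 by apply: Rmult_le_compat_l; [apply: pow_le |]; lra.
  lra.
have : INR N <= INR N ^ 2 by rewrite /= Rmult_1_r; nra.
by move=> le_N_sq; apply: Rabs_le; lra.
Qed.

Lemma coprime_floor_error_bound N : Rabs (coprime_floor_error N) <= 8 * INR N ^ 2.
Proof.
elim/ltn_ind: N => -[_ | N IHN].
  rewrite /coprime_floor_error /coprime_floor_total big_geq //=.
  by rewrite Rmult_0_l Rdiv_0_l Rminus_0_r Rabs_R0; lra.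
have := sum_coprime_floor_error_div (ltn0Sn N); rewrite sumR_ltn // divn1.
set tail := \big[Rplus/0]_(2 <= g < N.+2) coprime_floor_error (N.+1 %/ g) => main.
have : Rabs tail <= 6 * INR N.+1 ^ 2.
  apply: Rle_trans (Rabs_sumR_le _ _ _) _.
  apply: (Rle_trans _ (\big[Rplus/0]_(2 <= g < N.+2) (8 * INR N.+1 ^ 2 * / INR g ^ 2))).
    apply: sumR_le_nat => g lt1g _; have g_pos := INR_pos (ltnW lt1g).
    apply: Rle_trans (IHN _ (ltn_Pdiv lt1g (ltn0Sn N))) _.
    have [le_q _] := floor_div_bounds N.+1 (ltnW lt1g).
    have -> : 8 * INR N.+1 ^ 2 * / INR g ^ 2 = 8 * (INR N.+1 / INR g) ^ 2 by field; lra.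
    by apply: Rmult_le_compat_l; [lra | apply: pow_incr; split; [apply: pos_INR | ]].
  rewrite sumR_mull; have := sum_inv_sq_from2 N.+1.
  have : 0 <= INR N.+1 ^ 2 by apply/pow_le/pos_INR.
  nra.
have := Rabs_triang (coprime_floor_error N.+1 + tail) (- tail); rewrite Rabs_Ropp.
have -> : coprime_floor_error N.+1 + tail + - tail = coprime_floor_error N.+1 by ring.
lra.
Qed.

Lemma sum_totient_farey_index_error N : (0 < N)%nat ->
  Rabs (INR (\sum_(1 <= k < N.+1) totient k * farey_index N 1 k)%nat - INR N ^ 3 / (6 * z3))
  <= 9 * INR N ^ 2.
Proof.
move=> N_gt0; rewrite sum_totient_farey_index // plus_INR.
have := coprime_floor_error_bound N; rewrite /coprime_floor_error.
have : INR (totient_sum N) <= INR N ^ 2.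
  by rewrite /= Rmult_1_r -mult_INR; apply/le_INR/leP/totient_sum_le_sq.
have := Rabs_triang (INR (coprime_floor_total N) - INR N ^ 3 / (6 * z3)) (INR (totient_sum N)).
rewrite (Rabs_pos_eq (INR (totient_sum N))); last exact: pos_INR.
have -> : INR (coprime_floor_total N) - INR N ^ 3 / (6 * z3) + INR (totient_sum N) =
          INR (coprime_floor_total N) + INR (totient_sum N) - INR N ^ 3 / (6 * z3) by ring.
lra.
Qed.

End Zeta3.

End RealEstimates.

Theorem theorem4 :
  forall z3 : R, infinite_sum zeta3_term z3 ->
  exists C : R, forall N : nat, (2 <= N)%N ->
    (Rabs (INR (\sum_(1 <= k < N.+1) totient k * farey_index N 1 k)%N
          - pow (INR N) 3 / (6 * z3))
    <= C * (pow (INR N) 3 / ln (INR N)))%R.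
Proof.
move=> z3 z3_sum; exists 9%R => N le2N.
have N_gt1 : (1 < INR N)%R by apply: (lt_INR 1); apply/ltP.
apply: (Rle_trans _ _ _ (sum_totient_farey_index_error z3_sum (ltnW le2N))).
by apply: Rmult_le_compat_l; [lra | exact: sq_le_cube_div_ln].
Qed.
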